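(* Let $\mu$ be Lebesgue measure on $\mathbb{T}^2$, let $\alpha=n/m$ be rational ($n\in\mathbb{Z}$, $m\ge1$) and $\beta\in\mathbb{R}$. Then the measure-preserving system $(\mathbb{T}^2,\phi,\mu)$ is not weakly mixing. If moreover $\beta\in\mathbb{Z}+\alpha\mathbb{Z}$, then $(\mathbb{T}^2,\phi,\mu)$ is not ergodic.
   Context: $\mathbb{T}^2=[0,1)^2$ with addition modulo 1. Define $\theta(q)=1$ for $q\in[0,\tfrac12)$ and $\theta(q)=-1$ for $q\in[\tfrac12,1)$. The triangle map with parameters $(\alpha,\beta)$ is $\phi(q,p)=(q+p+\alpha\theta(q)+\beta,\ p+\alpha\theta(q)+\beta)\pmod 1$; it is a bijection preserving $\mu$. *)

From Stdlib Require Import Reals Lra ClassicalEpsilon.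
Open Scope R_scope.

Definition frac (x : R) : R := x - IZR (Int_part x).

Definition T2 (x : R * R) : Prop :=
  0 <= fst x < 1 /\ 0 <= snd x < 1.

Definition theta (q : R) : R := if Rlt_dec q (1/2) then 1 else -1.

Definition phi (alpha beta : R) (x : R * R) : R * R :=
  let q := fst x in let p := snd x in
  (frac (q + p + alpha * theta q + beta), frac (p + alpha * theta q + beta)).

Record rect := { ra1 : R; rb1 : R; ra2 : R; rb2 : R }.
Definition in_rect (r : rect) (x : R * R) : Prop :=
  ra1 r <= fst x <= rb1 r /\ ra2 r <= snd x <= rb2 r.
Definition area (r : rect) : R :=
  Rmax 0 (rb1 r - ra1 r) * Rmax 0 (rb2 r - ra2 r).

Definition cover_value (A : R * R -> Prop) (s : R) : Prop :=
  exists c : nat -> rect,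
    (forall x, A x -> exists k, in_rect (c k) x) /\
    Un_cv (fun N => sum_f_R0 (fun k => area (c k)) N) s.

Definition is_inf (P : R -> Prop) (m : R) : Prop :=
  (forall s, P s -> m <= s) /\ (forall m', (forall s, P s -> m' <= s) -> m' <= m).

(* Lebesgue (outer) measure of A (meaningful for A contained in T2) *)
Definition leb (A : R * R -> Prop) : R :=
  epsilon (inhabits 0) (fun m => is_inf (cover_value A) m).

Definition measurable (A : R * R -> Prop) : Prop :=
  (forall x, A x -> T2 x) /\
  forall E : R * R -> Prop, (forall x, E x -> T2 x) ->
    leb E = leb (fun x => E x /\ A x) + leb (fun x => E x /\ ~ A x).

Definition preim_iter (f : R * R -> R * R) (n : nat) (A : R * R -> Prop) :=
  fun x => T2 x /\ A (Nat.iter n f x).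

Definition ergodic (f : R * R -> R * R) : Prop :=
  forall A, measurable A ->
    (forall x, T2 x -> (A (f x) <-> A x)) ->
    leb A = 0 \/ leb A = 1.

Definition weak_mixing (f : R * R -> R * R) : Prop :=
  forall A B, measurable A -> measurable B ->
    Un_cv (fun N => / INR (S N) *
             sum_f_R0 (fun n => Rabs (leb (fun x => preim_iter f n A x /\ B x)
                                      - leb A * leb B)) N) 0.

(* Since m*alpha*theta(q) is an integer, the fractional part of m*p is
   moved by phi as the circle rotation u |-> u + m*beta.  Hence the strip sets
       strip m a b = { (q,p) in T2 | a <= frac (m p) < b },
   of measure b - a, are permuted by phi like arcs of a rotated circle, and
   the measure of phi^-k(strip 0 1/2) /\ strip c d is the length of an
   intersection of two arcs.  For the test sets strip 0 1/2 and strip 1/4 3/4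
   the two correlation defects add up to 1/4 for every k, so their Cesaro
   averages cannot both tend to 0.  When m*beta is an integer, strip 0 1/2 is
   itself invariant and has measure 1/2. *)

From Pilot Require Import Defs.
From Stdlib Require Import Reals ZArith Lra Lia List Classical ClassicalEpsilon
  FunctionalExtensionality PropExtensionality.
From Coquelicot Require Import Compactness.
(* Stdlib's arithmetic libraries shadow [leb]; re-import the torus definitions. *)
Import Pilot.Defs.
Open Scope R_scope.


Lemma Int_part_unique (k : Z) (r : R) : IZR k <= r < IZR k + 1 -> Int_part r = k.
Proof.
  intros [H1 H2]. destruct (base_Int_part r) as [B1 B2].
  assert (Hz : (k - Int_part r)%Z = 0%Z).
  { apply one_IZR_lt1. rewrite minus_IZR. lra. }
  lia.
Qed.

Lemma frac_range (r : R) : 0 <= frac r < 1.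
Proof. unfold frac. destruct (base_Int_part r). lra. Qed.

Lemma frac_addZ (r : R) (z : Z) : frac (r + IZR z) = frac r.
Proof.
  unfold frac. rewrite (Int_part_unique (Int_part r + z) (r + IZR z)).
  - rewrite plus_IZR. ring.
  - destruct (base_Int_part r). rewrite plus_IZR. lra.
Qed.

Lemma frac_frac_add (x y : R) : frac (frac x + y) = frac (x + y).
Proof.
  replace (frac x + y) with ((x + y) + IZR (- Int_part x)).
  - apply frac_addZ.
  - unfold frac. rewrite opp_IZR. ring.
Qed.

Lemma frac_mul_nat (m : nat) (y : R) : frac (INR m * frac y) = frac (INR m * y).
Proof.
  replace (INR m * frac y) with (INR m * y + IZR (- (Z.of_nat m * Int_part y))).
  - apply frac_addZ.
  - unfold frac. rewrite opp_IZR, mult_IZR, <- INR_IZR_INZ. ring.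
Qed.

Lemma frac_sum_cases u t : 0 <= u < 1 -> 0 <= t < 1 ->
  (u + t < 1 /\ frac (u + t) = u + t) \/ (1 <= u + t /\ frac (u + t) = u + t - 1).
Proof.
  intros Hu Ht. destruct (Rlt_dec (u + t) 1) as [H|H].
  - left. split; [exact H|]. unfold frac. rewrite (Int_part_unique 0); simpl; lra.
  - right. split; [lra|]. unfold frac. rewrite (Int_part_unique 1); simpl; lra.
Qed.

Lemma Un_cv_const (u : nat -> R) v : (forall N, u N = v) -> Un_cv u v.
Proof.
  intros H eps He. exists 0%nat. intros N _. unfold R_dist.
  rewrite H, Rminus_diag, Rabs_R0. exact He.
Qed.

Lemma psum_mono (f : nat -> R) i j : (forall k, 0 <= f k) -> (i <= j)%nat ->
  sum_f_R0 f i <= sum_f_R0 f j.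
Proof.
  intros Hf Hij. induction Hij as [|j _ IH]; [lra|].
  rewrite tech5. specialize (Hf (S j)). lra.
Qed.

Lemma term_le_psum (f : nat -> R) k N : (forall i, 0 <= f i) -> (k <= N)%nat ->
  f k <= sum_f_R0 f N.
Proof.
  intros Hf Hk. destruct k as [|k]; simpl.
  - eapply Rle_trans; [|apply (psum_mono f 0 N Hf Hk)]. simpl; lra.
  - eapply Rle_trans; [|apply (psum_mono f (S k) N Hf Hk)].
    rewrite tech5. pose proof (cond_pos_sum f k Hf). lra.
Qed.

Definition inT2 (A : R * R -> Prop) : Prop := forall x, A x -> T2 x.

Lemma set_ext (A B : R * R -> Prop) : (forall x, A x <-> B x) -> A = B.
Proof.
  intros H. apply functional_extensionality. intros x.
  apply propositional_extensionality. apply H.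
Qed.

Lemma leb_ext A B : (forall x, A x <-> B x) -> leb A = leb B.
Proof. intros H. rewrite (set_ext A B H). reflexivity. Qed.

Lemma area_nonneg r : 0 <= area r.
Proof. unfold area. apply Rmult_le_pos; apply Rmax_l. Qed.

Definition zrect : rect := {| ra1 := 0; rb1 := 0; ra2 := 0; rb2 := 0 |}.

Lemma area_zrect : area zrect = 0.
Proof. unfold area; simpl. rewrite Rminus_diag, Rmax_left by lra. ring. Qed.

Lemma cover_value_nonneg A s : cover_value A s -> 0 <= s.
Proof.
  intros [c [_ Hc]].
  pose proof (sum_incr _ 0 s Hc (fun k => area_nonneg (c k))).
  pose proof (area_nonneg (c 0%nat)). simpl in *. lra.
Qed.

Lemma cover_bounded A (c : nat -> rect) s :
  (forall x, A x -> exists k, in_rect (c k) x) ->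
  (forall N, sum_f_R0 (fun k => area (c k)) N <= s) ->
  exists l, l <= s /\ cover_value A l.
Proof.
  intros Hc Hs.
  destruct (growing_cv (fun N => sum_f_R0 (fun k => area (c k)) N)) as [l Hl].
  - intros N. rewrite tech5. pose proof (area_nonneg (c (S N))). lra.
  - exists s. intros y [N ->]. apply Hs.
  - exists l. split; [|exists c; auto].
    apply (Rle_cv_lim (fun N => Hs N) Hl). apply Un_cv_const. reflexivity.
Qed.

Definition pad (r : nat -> rect) (M k : nat) : rect :=
  if (k <=? M)%nat then r k else zrect.

Lemma pad_psum (r : nat -> rect) M N :
  sum_f_R0 (fun k => area (pad r M k)) N <= sum_f_R0 (fun k => area (r k)) M.
Proof.
  assert (Hnn : forall k, 0 <= area (r k)) by (intros; apply area_nonneg).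
  induction N as [|N IH]; simpl.
  - unfold pad. replace (0 <=? M)%nat with true by (symmetry; apply Nat.leb_le; lia).
    apply (term_le_psum (fun k => area (r k)) 0 M Hnn). lia.
  - unfold pad at 2. destruct (Nat.leb_spec (S N) M) as [HN|HN].
    + rewrite (sum_eq _ (fun k => area (r k))).
      * rewrite <- tech5. apply psum_mono; auto.
      * intros k Hk. unfold pad. replace (k <=? M)%nat with true by (symmetry; apply Nat.leb_le; lia).
        reflexivity.
    + rewrite area_zrect. lra.
Qed.

Lemma cover_value_finite A (r : nat -> rect) M :
  (forall x, A x -> exists k, (k <= M)%nat /\ in_rect (r k) x) ->
  exists l, l <= sum_f_R0 (fun k => area (r k)) M /\ cover_value A l.
Proof.
  intros Hr. apply (cover_bounded A (pad r M)).
  - intros x Hx. destruct (Hr x Hx) as [k [Hk Hin]]. exists k. unfold pad.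
    replace (k <=? M)%nat with true by (symmetry; apply Nat.leb_le; lia). exact Hin.
  - apply pad_psum.
Qed.

(* Every subset of T2 has a cover (by [0,1]^2), so leb is a true infimum. *)
Definition unit_rect : rect := {| ra1 := 0; rb1 := 1; ra2 := 0; rb2 := 1 |}.

Lemma leb_spec A : inT2 A -> is_inf (cover_value A) (leb A).
Proof.
  intros HA. unfold leb. apply epsilon_spec.
  destruct (cover_value_finite A (fun _ => unit_rect) 0) as [s0 [_ Hs0]].
  { intros x Hx. exists 0%nat. split; [lia|].
    destruct (HA x Hx) as [[? ?] [? ?]]. unfold in_rect; simpl. lra. }
  set (E := fun y => exists s, cover_value A s /\ y = - s).
  destruct (completeness E) as [l [Hl1 Hl2]].
  - exists 0. intros y [s [Hs ->]]. apply cover_value_nonneg in Hs. lra.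
  - exists (- s0), s0. auto.
  - exists (- l). split.
    + intros s Hs. assert (E (- s)) as HE by (exists s; auto). specialize (Hl1 _ HE). lra.
    + intros m' Hm'. assert (l <= - m'); [|lra].
      apply Hl2. intros y [s [Hs ->]]. specialize (Hm' s Hs). lra.
Qed.

Lemma leb_le_cover A s : inT2 A -> cover_value A s -> leb A <= s.
Proof. intros HA Hs. apply (proj1 (leb_spec A HA)). exact Hs. Qed.

Lemma leb_ge A r : inT2 A -> (forall s, cover_value A s -> r <= s) -> r <= leb A.
Proof. intros HA H. apply (proj2 (leb_spec A HA)). exact H. Qed.

Lemma leb_nonneg A : inT2 A -> 0 <= leb A.
Proof. intros HA. apply leb_ge; [exact HA|]. apply cover_value_nonneg. Qed.

Lemma leb_mono A B : inT2 B -> (forall x, A x -> B x) -> leb A <= leb B.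
Proof.
  intros HB H. apply leb_ge; [intros x Hx; auto|].
  intros s [c [Hc1 Hc2]]. apply leb_le_cover; [intros x Hx; auto|].
  exists c. split; auto.
Qed.

Lemma leb_le_finite_cover A (r : nat -> rect) M : inT2 A ->
  (forall x, A x -> exists k, (k <= M)%nat /\ in_rect (r k) x) ->
  leb A <= sum_f_R0 (fun k => area (r k)) M.
Proof.
  intros HA Hr. destruct (cover_value_finite A r M Hr) as [l [Hl Hcv]].
  pose proof (leb_le_cover A l HA Hcv). lra.
Qed.

Definition interleave (cA cB : nat -> rect) (k : nat) : rect :=
  if Nat.even k then cA (Nat.div2 k) else cB (Nat.div2 k).

Lemma interleave_even cA cB N : interleave cA cB (2 * N) = cA N.
Proof. unfold interleave. rewrite Nat.even_even, Nat.div2_double. reflexivity. Qed.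

Lemma interleave_odd cA cB N : interleave cA cB (S (2 * N)) = cB N.
Proof.
  unfold interleave. replace (S (2 * N)) with (2 * N + 1)%nat by lia.
  rewrite Nat.even_odd. replace (2 * N + 1)%nat with (S (2 * N)) by lia.
  rewrite Nat.div2_succ_double. reflexivity.
Qed.

Lemma interleave_psum cA cB N :
  sum_f_R0 (fun k => area (interleave cA cB k)) (S (2 * N)) =
  sum_f_R0 (fun k => area (cA k)) N + sum_f_R0 (fun k => area (cB k)) N.
Proof.
  induction N as [|N IH].
  - simpl. change 0%nat with (2 * 0)%nat. rewrite interleave_even.
    change 1%nat with (S (2 * 0)). rewrite interleave_odd. simpl. ring.
  - replace (S (2 * S N)) with (S (S (S (2 * N)))) by lia.
    rewrite (tech5 _ (S (S (2 * N)))), (tech5 _ (S (2 * N))), IH.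
    replace (S (S (2 * N))) with (2 * S N)%nat by lia.
    rewrite interleave_even, interleave_odd, !tech5. ring.
Qed.

Lemma cover_value_union A B sA sB : cover_value A sA -> cover_value B sB ->
  exists s, s <= sA + sB /\ cover_value (fun x => A x \/ B x) s.
Proof.
  intros [cA [HA1 HA2]] [cB [HB1 HB2]]. apply (cover_bounded _ (interleave cA cB)).
  - intros x [Hx|Hx].
    + destruct (HA1 x Hx) as [k Hk]. exists (2 * k)%nat. rewrite interleave_even. exact Hk.
    + destruct (HB1 x Hx) as [k Hk]. exists (S (2 * k)). rewrite interleave_odd. exact Hk.
  - intros N. eapply Rle_trans.
    + apply (psum_mono _ N (S (2 * N))); [intros; apply area_nonneg|lia].
    + rewrite interleave_psum.
      pose proof (sum_incr _ N sA HA2 (fun k => area_nonneg (cA k))).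
      pose proof (sum_incr _ N sB HB2 (fun k => area_nonneg (cB k))). lra.
Qed.

Lemma leb_union A B : inT2 A -> inT2 B -> leb (fun x => A x \/ B x) <= leb A + leb B.
Proof.
  intros HA HB. assert (HU : inT2 (fun x => A x \/ B x)) by (intros x [H|H]; auto).
  cut (leb (fun x => A x \/ B x) - leb A <= leb B); [lra|].
  apply leb_ge; [exact HB|]. intros sB HsB.
  cut (leb (fun x => A x \/ B x) - sB <= leb A); [lra|].
  apply leb_ge; [exact HA|]. intros sA HsA.
  destruct (cover_value_union A B sA sB HsA HsB) as [s [Hs Hcv]].
  pose proof (leb_le_cover _ _ HU Hcv). lra.
Qed.

Lemma measurable_ext A B : (forall x, A x <-> B x) -> measurable A -> measurable B.
Proof. intros H HA. rewrite <- (set_ext A B H). exact HA. Qed.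

Lemma measurable_empty : measurable (fun _ => False).
Proof.
  split; [tauto|]. intros E HE.
  assert (H0 : leb (fun x => E x /\ False) = 0).
  { apply Rle_antisym.
    - rewrite <- area_zrect. change (area zrect) with (sum_f_R0 (fun _ => area zrect) 0).
      apply leb_le_finite_cover; [intros x [_ []]|intros x [_ []]].
    - apply leb_nonneg. intros x [_ []]. }
  rewrite H0, (leb_ext (fun x => E x /\ ~ False) E) by tauto. ring.
Qed.

Lemma measurable_compl A : measurable A -> measurable (fun x => T2 x /\ ~ A x).
Proof.
  intros [HA1 HA2]. split; [intros x [H _]; exact H|].
  intros E HE. rewrite (HA2 E HE).
  rewrite (leb_ext (fun x => E x /\ T2 x /\ ~ A x) (fun x => E x /\ ~ A x)).
  2:{ intros x; split; [tauto|]. intros [H1 H2]; auto. }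
  rewrite (leb_ext (fun x => E x /\ ~ (T2 x /\ ~ A x)) (fun x => E x /\ A x)).
  2:{ intros x; split; [|tauto]. intros [H1 H2]. split; [exact H1|]. apply NNPP. auto. }
  ring.
Qed.

Lemma measurable_inter A B : measurable A -> measurable B -> measurable (fun x => A x /\ B x).
Proof.
  intros [HA1 HA2] [HB1 HB2]. split; [intros x [H _]; auto|].
  intros E HE. rewrite (HA2 E HE).
  rewrite (HB2 (fun x => E x /\ A x)) by (intros x [H _]; auto).
  rewrite (HA2 (fun x => E x /\ ~ (A x /\ B x))) by (intros x [H _]; auto).
  rewrite (leb_ext (fun x => (E x /\ A x) /\ B x) (fun x => E x /\ A x /\ B x)) by tauto.
  rewrite (leb_ext (fun x => (E x /\ ~ (A x /\ B x)) /\ A x) (fun x => (E x /\ A x) /\ ~ B x)) by tauto.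
  rewrite (leb_ext (fun x => (E x /\ ~ (A x /\ B x)) /\ ~ A x) (fun x => E x /\ ~ A x)) by tauto.
  ring.
Qed.

Lemma measurable_union A B : measurable A -> measurable B -> measurable (fun x => A x \/ B x).
Proof.
  intros HA HB.
  apply (measurable_ext (fun x => T2 x /\ ~ ((T2 x /\ ~ A x) /\ (T2 x /\ ~ B x)))).
  - destruct HA as [HA _], HB as [HB _]. intros x; split.
    + intros [HT H]. apply NNPP. intros Hn. apply H. tauto.
    + intros [H|H]; split; eauto; tauto.
  - apply measurable_compl, measurable_inter; apply measurable_compl; assumption.
Qed.

Lemma measurable_finite_union (F : nat -> R * R -> Prop) J :
  (forall j, measurable (F j)) -> measurable (fun x => exists j, (j < J)%nat /\ F j x).
Proof.
  intros HF. induction J as [|J IH].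
  - apply (measurable_ext (fun _ => False)); [|exact measurable_empty].
    intros x; split; [tauto|]. intros [j [Hj _]]. lia.
  - apply (measurable_ext (fun x => (exists j, (j < J)%nat /\ F j x) \/ F J x)).
    + intros x; split.
      * intros [[j [Hj H]]|H]; exists j || exists J; split; auto; lia.
      * intros [j [Hj H]]. destruct (Nat.eq_dec j J) as [->|Hne]; [right; exact H|].
        left. exists j. split; [lia|exact H].
    + apply measurable_union; auto.
Qed.

Definition below (c : R) : R * R -> Prop := fun x => T2 x /\ snd x < c.

Definition lower_part (c : R) (r : rect) : rect :=
  {| ra1 := ra1 r; rb1 := rb1 r; ra2 := ra2 r; rb2 := Rmin (rb2 r) c |}.
Definition upper_part (c : R) (r : rect) : rect :=
  {| ra1 := ra1 r; rb1 := rb1 r; ra2 := Rmax (ra2 r) c; rb2 := rb2 r |}.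

Lemma area_cut c r : area (lower_part c r) + area (upper_part c r) <= area r.
Proof.
  unfold area, lower_part, upper_part; simpl.
  assert (Hlen : forall a b, Rmax 0 (Rmin b c - a) + Rmax 0 (b - Rmax a c) <= Rmax 0 (b - a)).
  { intros a b. unfold Rmax, Rmin.
    repeat match goal with |- context [Rle_dec ?x ?y] => destruct (Rle_dec x y) end; lra. }
  pose proof (Hlen (ra2 r) (rb2 r)). pose proof (Rmax_l 0 (rb1 r - ra1 r)).
  rewrite <- Rmult_plus_distr_l. apply Rmult_le_compat_l; assumption.
Qed.

(* Splitting every rectangle of a cover of E by the line p = c shows that
   the half-planes below p = c satisfy the Caratheodory criterion. *)
Lemma below_measurable c : measurable (below c).
Proof.
  split; [intros x [H _]; exact H|]. intros E HE.
  assert (H1 : inT2 (fun x => E x /\ below c x)) by (intros x [H _]; auto).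
  assert (H2 : inT2 (fun x => E x /\ ~ below c x)) by (intros x [H _]; auto).
  apply Rle_antisym.
  - rewrite (leb_ext E (fun x => (E x /\ below c x) \/ (E x /\ ~ below c x))) by (intros; tauto).
    apply leb_union; assumption.
  - apply leb_ge; [exact HE|]. intros s [cv [Hc1 Hc2]].
    assert (Hcut : forall k, 0 <= area (lower_part c (cv k)) <= area (cv k) /\
                             0 <= area (upper_part c (cv k)) <= area (cv k)).
    { intros k. pose proof (area_cut c (cv k)).
      pose proof (area_nonneg (lower_part c (cv k))). pose proof (area_nonneg (upper_part c (cv k))).
      lra. }
    destruct (Rseries_CV_comp (fun k => area (lower_part c (cv k))) (fun k => area (cv k))
                (fun k => proj1 (Hcut k)) (exist _ s Hc2)) as [s1 Hs1].
    destruct (Rseries_CV_comp (fun k => area (upper_part c (cv k))) (fun k => area (cv k))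
                (fun k => proj2 (Hcut k)) (exist _ s Hc2)) as [s2 Hs2].
    assert (L1 : leb (fun x => E x /\ below c x) <= s1).
    { apply leb_le_cover; [exact H1|]. exists (fun k => lower_part c (cv k)). split; [|exact Hs1].
      intros x [Hx [_ Hp]]. destruct (Hc1 x Hx) as [k Hk]. exists k.
      unfold in_rect, lower_part in *; simpl. unfold Rmin. destruct (Rle_dec (rb2 (cv k)) c); lra. }
    assert (L2 : leb (fun x => E x /\ ~ below c x) <= s2).
    { apply leb_le_cover; [exact H2|]. exists (fun k => upper_part c (cv k)). split; [|exact Hs2].
      intros x [Hx Hp]. destruct (Hc1 x Hx) as [k Hk]. exists k.
      assert (c <= snd x) by (apply Rnot_lt_le; intros Hlt; apply Hp; split; auto).
      unfold in_rect, upper_part in *; simpl. unfold Rmax. destruct (Rle_dec (ra2 (cv k)) c); lra. }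
    assert (s1 + s2 <= s).
    { apply (Rle_cv_lim (Un := fun N => sum_f_R0 (fun k => area (lower_part c (cv k))) N +
                                     sum_f_R0 (fun k => area (upper_part c (cv k))) N)
                         (Vn := fun N => sum_f_R0 (fun k => area (cv k)) N)).
      - intros N. rewrite <- sum_plus. apply sum_Rle. intros k _. apply area_cut.
      - apply CV_plus; assumption.
      - exact Hc2. }
    lra.
Qed.

Definition ind (P : Prop) : R := if excluded_middle_informative P then 1 else 0.

Lemma ind_nonneg P : 0 <= ind P.
Proof. unfold ind. destruct (excluded_middle_informative P); lra. Qed.

Lemma ind_true (P : Prop) : P -> ind P = 1.
Proof. intros H. unfold ind. destruct (excluded_middle_informative P); tauto. Qed.

Lemma ind_and P Q : ind (P /\ Q) = ind P * ind Q.
Proof.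
  unfold ind. destruct (excluded_middle_informative (P /\ Q)), (excluded_middle_informative P),
    (excluded_middle_informative Q); try ring; tauto.
Qed.

Lemma sum_swap (f : nat -> nat -> R) K N :
  sum_f_R0 (fun i => sum_f_R0 (fun k => f i k) N) K =
  sum_f_R0 (fun k => sum_f_R0 (fun i => f i k) K) N.
Proof.
  induction K as [|K IH]; [reflexivity|].
  rewrite tech5, IH, <- sum_plus. apply sum_eq. intros i _. rewrite tech5. reflexivity.
Qed.

Lemma sum_prod (f g : nat -> R) K M :
  sum_f_R0 (fun i => sum_f_R0 (fun j => f i * g j) M) K = sum_f_R0 f K * sum_f_R0 g M.
Proof.
  assert (Hs : forall c, sum_f_R0 (fun j => c * g j) M = c * sum_f_R0 g M).
  { intros c. rewrite scal_sum. apply sum_eq. intros; ring. }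
  induction K as [|K IH]; simpl; [apply Hs|]. rewrite IH, Hs. ring.
Qed.

Definition lattice_count (h : R) (K : nat) (a b : R) : R :=
  sum_f_R0 (fun i => ind (a <= INR i * h <= b)) K.

(* At most (b - a)/h + 1 lattice points lie in [a,b]; the induction tracks the
   sharper bound where b is replaced by min(b, K h). *)
Lemma lattice_count_interval_aux a b h K : 0 < h ->
  h * lattice_count h K a b <= Rmax 0 (Rmin b (INR K * h) - a + h).
Proof.
  intros Hh. unfold lattice_count. induction K as [|K IH].
  - simpl. unfold ind. destruct (excluded_middle_informative (a <= 0 * h <= b)).
    + rewrite Rmin_right by lra. rewrite Rmax_right by nra. nra.
    + rewrite Rmult_0_r. apply Rmax_l.
  - rewrite tech5, Rmult_plus_distr_l. unfold ind at 2.
    rewrite S_INR in *.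
    destruct (excluded_middle_informative (a <= (INR K + 1) * h <= b)) as [Hin|Hout].
    + rewrite Rmin_right in IH by nra. rewrite Rmin_right by lra. rewrite Rmax_right by nra.
      assert (Rmax 0 (INR K * h - a + h) <= (INR K + 1) * h - a) by (apply Rmax_lub; nra).
      lra.
    + rewrite Rmult_0_r, Rplus_0_r. eapply Rle_trans; [exact IH|].
      apply Rle_max_compat_l.
      assert (Rmin b (INR K * h) <= Rmin b ((INR K + 1) * h)) by (apply Rle_min_compat_l; nra).
      lra.
Qed.

Lemma lattice_count_interval a b h K : 0 < h ->
  0 <= h * lattice_count h K a b <= Rmax 0 (b - a) + h.
Proof.
  intros Hh. split.
  - apply Rmult_le_pos; [lra|]. apply cond_pos_sum. intros; apply ind_nonneg.
  - eapply Rle_trans; [apply lattice_count_interval_aux; exact Hh|].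
    pose proof (Rmax_l 0 (b - a)). pose proof (Rmax_r 0 (b - a)). pose proof (Rmin_l b (INR K * h)).
    apply Rmax_lub; lra.
Qed.

Definition wid (r : rect) : R := Rmax 0 (rb1 r - ra1 r).
Definition hei (r : rect) : R := Rmax 0 (rb2 r - ra2 r).

Definition square (L : R) (z : R * R) : Prop := 0 <= fst z <= L /\ 0 <= snd z <= L.

(* If each of the (K+1)^2 lattice points (i h, j h), i, j <= K, lies in one of
   the rectangles V 0, ..., V N, counting them rectangle by rectangle gives
   (K+1)^2 <= sum_k (points of V k) = sum_k (count in x) * (count in y). *)
Lemma lattice_points_in_cover (V : nat -> rect) N h K :
  (forall i j, (i <= K)%nat -> (j <= K)%nat ->
     exists k, (k <= N)%nat /\ in_rect (V k) (INR i * h, INR j * h)) ->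
  (INR K + 1) ^ 2 <= sum_f_R0 (fun k =>
     lattice_count h K (ra1 (V k)) (rb1 (V k)) * lattice_count h K (ra2 (V k)) (rb2 (V k))) N.
Proof.
  intros Hcov.
  transitivity (sum_f_R0 (fun i => sum_f_R0 (fun j => sum_f_R0 (fun k =>
                  ind (in_rect (V k) (INR i * h, INR j * h))) N) K) K).
  - replace ((INR K + 1) ^ 2) with (sum_f_R0 (fun i => sum_f_R0 (fun j => 1) K) K).
    2:{ rewrite sum_eq with (Bn := fun _ => INR (S K)) by (intros; rewrite sum_cte; ring).
        rewrite sum_cte, S_INR. ring. }
    apply sum_Rle. intros i Hi. apply sum_Rle. intros j Hj.
    destruct (Hcov i j Hi Hj) as [k [Hk Hin]].
    rewrite <- (ind_true _ Hin). apply (term_le_psum (fun k => ind (in_rect (V k) _)) k N); auto.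
    intros; apply ind_nonneg.
  - right. rewrite sum_eq with (Bn := fun i => sum_f_R0 (fun k => sum_f_R0 (fun j =>
              ind (in_rect (V k) (INR i * h, INR j * h))) K) N) by (intros; apply sum_swap).
    rewrite sum_swap. apply sum_eq. intros k _. unfold lattice_count. rewrite <- sum_prod.
    apply sum_eq. intros i _. apply sum_eq. intros j _.
    unfold in_rect. simpl. apply ind_and.
Qed.

Lemma lattice_count_cover (V : nat -> rect) N L K : 0 < L -> (1 <= K)%nat ->
  (forall z, square L z -> exists k, (k <= N)%nat /\ in_rect (V k) z) ->
  (L + L / INR K) ^ 2 <= sum_f_R0 (fun k => (wid (V k) + L / INR K) * (hei (V k) + L / INR K)) N.
Proof.
  intros HL HK Hcov. set (h := L / INR K).
  assert (HKp : 0 < INR K) by (apply lt_0_INR; lia).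
  assert (Hh : 0 < h) by (unfold h; apply Rdiv_lt_0_compat; assumption).
  assert (Hpoints := lattice_points_in_cover V N h K).
  replace ((L + h) ^ 2) with (h ^ 2 * (INR K + 1) ^ 2) by (unfold h; field; lra).
  eapply Rle_trans.
  { apply Rmult_le_compat_l; [apply pow_le; lra|]. apply Hpoints.
    intros i j Hi Hj. apply Hcov.
    assert (INR i <= INR K) by (apply le_INR; exact Hi).
    assert (INR j <= INR K) by (apply le_INR; exact Hj).
    assert (INR K * h = L) by (unfold h; field; lra).
    pose proof (pos_INR i). pose proof (pos_INR j).
    unfold square; simpl; split; split; nra. }
  rewrite scal_sum. apply sum_Rle. intros k _.
  pose proof (lattice_count_interval (ra1 (V k)) (rb1 (V k)) h K Hh).
  pose proof (lattice_count_interval (ra2 (V k)) (rb2 (V k)) h K Hh).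
  unfold wid, hei.
  replace (_ * _ * h ^ 2) with ((h * lattice_count h K (ra1 (V k)) (rb1 (V k))) *
                                (h * lattice_count h K (ra2 (V k)) (rb2 (V k)))) by ring.
  apply Rmult_le_compat; lra.
Qed.

Lemma le_0_of_le_div_nat x C : (forall K, (1 <= K)%nat -> x <= C / INR K) -> x <= 0.
Proof.
  intros H. apply Rnot_lt_le. intros Hx.
  destruct (INR_archimed x C Hx) as [K HK].
  specialize (H (S K) ltac:(lia)).
  assert (HKp : 0 < INR (S K)) by (apply lt_0_INR; lia).
  rewrite S_INR in *. apply (Rmult_le_compat_r (INR K + 1)) in H; [|lra].
  replace (C / (INR K + 1) * (INR K + 1)) with C in H by (field; lra).
  lra.
Qed.

(* Area inequality for finite covers of a square: refine the lattice of
   [lattice_count_cover] and let the mesh L/K tend to 0. *)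
Lemma finite_cover_area (V : nat -> rect) N L : 0 < L ->
  (forall z, square L z -> exists k, (k <= N)%nat /\ in_rect (V k) z) ->
  L ^ 2 <= sum_f_R0 (fun k => area (V k)) N.
Proof.
  intros HL Hcov. set (C := sum_f_R0 (fun k => wid (V k) + hei (V k) + L) N).
  cut (L ^ 2 - sum_f_R0 (fun k => area (V k)) N <= 0); [lra|].
  apply (le_0_of_le_div_nat _ (L * C)). intros K HK.
  assert (HKp : 1 <= INR K) by (apply (le_INR 1); exact HK).
  set (h := L / INR K).
  assert (Hh : 0 < h <= L).
  { unfold h. split; [apply Rdiv_lt_0_compat; lra|].
    apply Rmult_le_reg_r with (INR K); [lra|]. field_simplify; nra. }
  pose proof (lattice_count_cover V N L K HL HK Hcov) as Hcount. fold h in Hcount.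
  assert (Hsum : sum_f_R0 (fun k => (wid (V k) + h) * (hei (V k) + h)) N <=
                 sum_f_R0 (fun k => area (V k)) N + h * C).
  { unfold C. rewrite scal_sum, <- sum_plus. apply sum_Rle. intros k _.
    pose proof (Rmax_l 0 (rb1 (V k) - ra1 (V k))). pose proof (Rmax_l 0 (rb2 (V k) - ra2 (V k))).
    unfold area, wid, hei in *. nra. }
  replace (L * C / INR K) with (h * C) by (unfold h; field; lra).
  assert (L ^ 2 <= (L + h) ^ 2) by nra.
  lra.
Qed.

Definition inopen (r : rect) (z : R * R) : Prop :=
  ra1 r < fst z < rb1 r /\ ra2 r < snd z < rb2 r.

Lemma inopen_margin r z : inopen r z ->
  exists d : posreal, forall w, Rabs (fst w - fst z) < d -> Rabs (snd w - snd z) < d -> in_rect r w.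
Proof.
  intros [[H1 H2] [H3 H4]].
  set (dx := Rmin (fst z - ra1 r) (rb1 r - fst z)).
  set (dy := Rmin (snd z - ra2 r) (rb2 r - snd z)).
  assert (Hd : 0 < Rmin dx dy) by (unfold dx, dy; repeat apply Rmin_pos; lra).
  exists (mkposreal _ Hd); simpl. intros w Hw1 Hw2.
  apply Rabs_def2 in Hw1; apply Rabs_def2 in Hw2.
  pose proof (Rmin_l dx dy). pose proof (Rmin_r dx dy).
  pose proof (Rmin_l (fst z - ra1 r) (rb1 r - fst z)). pose proof (Rmin_r (fst z - ra1 r) (rb1 r - fst z)).
  pose proof (Rmin_l (snd z - ra2 r) (rb2 r - snd z)). pose proof (Rmin_r (snd z - ra2 r) (rb2 r - snd z)).
  unfold in_rect, dx, dy in *. lra.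
Qed.

Lemma le_fold_max {A} (f : A -> nat) l t :
  In t l -> (f t <= fold_right (fun u N => Nat.max (f u) N) 0 l)%nat.
Proof.
  induction l as [|u l IH]; simpl; [tauto|].
  intros [->|H]; [lia|]. specialize (IH H). lia.
Qed.

(* Each point of the square gets a gauge (an index k and a
   margin inside U k); Coquelicot's [compactness_list] then provides finitely
   many points whose gauge neighbourhoods cover the square. *)
Lemma square_finite_subcover (U : nat -> rect) L :
  (forall z, square L z -> exists k, inopen (U k) z) ->
  exists N, forall z, square L z -> exists k, (k <= N)%nat /\ in_rect (U k) z.
Proof.
  intros Hcov.
  assert (Hgauge : forall t : Tn 2 R, exists p : nat * posreal,
    square L (fst t, fst (snd t)) ->
    forall w, Rabs (fst w - fst t) < snd p -> Rabs (snd w - fst (snd t)) < snd p ->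
    in_rect (U (fst p)) w).
  { intros [u [v []]]. destruct (classic (square L (u, v))) as [Hs|Hs].
    - destruct (Hcov _ Hs) as [k Hk]. destruct (inopen_margin _ _ Hk) as [d Hd].
      exists (k, d). intros _. exact Hd.
    - exists (0%nat, mkposreal 1 Rlt_0_1). tauto. }
  set (gauge t := proj1_sig (constructive_indefinite_description _ (Hgauge t))).
  assert (Hg : forall t, square L (fst t, fst (snd t)) ->
    forall w, Rabs (fst w - fst t) < snd (gauge t) -> Rabs (snd w - fst (snd t)) < snd (gauge t) ->
    in_rect (U (fst (gauge t))) w).
  { intros t. exact (proj2_sig (constructive_indefinite_description _ (Hgauge t))). }
  apply NNPP. intros Hno.
  apply (compactness_list 2 (0, (0, tt)) (L, (L, tt)) (fun t => snd (gauge t))).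
  intros [l Hl]. apply Hno.
  exists (fold_right (fun t N => Nat.max (fst (gauge t)) N) 0%nat l).
  intros [x y] Hxy.
  destruct (Hl (x, (y, tt))) as [[u [v []]] [Hin [Hb Hc]]].
  { unfold square in Hxy; simpl in *; tauto. }
  exists (fst (gauge (u, (v, tt)))). split.
  - exact (le_fold_max (fun t => fst (gauge t)) l _ Hin).
  - simpl in Hb, Hc. apply Hg; unfold square; simpl; tauto.
Qed.

Definition enlarge (d : R) (r : rect) : rect :=
  {| ra1 := ra1 r - d; rb1 := rb1 r + d; ra2 := ra2 r - d; rb2 := rb2 r + d |}.

Lemma area_enlarge d r : 0 <= d <= 1 ->
  area (enlarge d r) <= area r + d * (2 * wid r + 2 * hei r + 4).
Proof.
  intros Hd.
  assert (Hshift : forall x, Rmax 0 (x + 2 * d) <= Rmax 0 x + 2 * d).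
  { intros x. apply Rmax_lub; pose proof (Rmax_l 0 x); pose proof (Rmax_r 0 x); lra. }
  assert (Hw : Rmax 0 (rb1 r + d - (ra1 r - d)) <= wid r + 2 * d).
  { unfold wid. replace (rb1 r + d - (ra1 r - d)) with (rb1 r - ra1 r + 2 * d) by ring. apply Hshift. }
  assert (Hh : Rmax 0 (rb2 r + d - (ra2 r - d)) <= hei r + 2 * d).
  { unfold hei. replace (rb2 r + d - (ra2 r - d)) with (rb2 r - ra2 r + 2 * d) by ring. apply Hshift. }
  pose proof (Rmax_l 0 (rb1 r + d - (ra1 r - d))). pose proof (Rmax_l 0 (rb2 r + d - (ra2 r - d))).
  assert (0 <= wid r) by apply Rmax_l. assert (0 <= hei r) by apply Rmax_l.
  change (area r) with (wid r * hei r). unfold area, enlarge; simpl.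
  apply Rle_trans with ((wid r + 2 * d) * (hei r + 2 * d)); [apply Rmult_le_compat; lra|nra].
Qed.

Lemma geom_psum eps N : sum_f_R0 (fun k => eps * (1/2) ^ (S k)) N = eps * (1 - (1/2) ^ (S N)).
Proof. induction N as [|N IH]; [simpl; field|]. rewrite tech5, IH. simpl. field. Qed.

(* Every countable rectangle cover of the torus has total area at least 1:
   enlarge the k-th rectangle by an amount costing eps/2^(k+1) of area so that
   the interiors cover [0,1-eps]^2, extract a finite subcover and compare areas. *)
Lemma cover_T2_ge_1 s : cover_value T2 s -> 1 <= s.
Proof.
  intros [c [Hc1 Hc2]].
  assert (Hshrink : forall eps, 0 < eps <= 1/2 -> (1 - eps) ^ 2 <= s + eps).
  { intros eps Heps.
    set (d k := eps * (1/2) ^ (S k) / (2 * wid (c k) + 2 * hei (c k) + 4)).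
    assert (Hd : forall k, 0 < d k <= 1 /\
                 d k * (2 * wid (c k) + 2 * hei (c k) + 4) = eps * (1/2) ^ (S k)).
    { intros k. unfold d. assert (0 <= wid (c k)) by apply Rmax_l. assert (0 <= hei (c k)) by apply Rmax_l.
      assert (0 < (1/2) ^ (S k) <= 1) by (split; [apply pow_lt; lra|left; apply pow_lt_1_compat; [lra|lia]]).
      split; [split|].
      - apply Rdiv_lt_0_compat; nra.
      - apply Rmult_le_reg_r with (2 * wid (c k) + 2 * hei (c k) + 4); [lra|]. field_simplify; nra.
      - field. lra. }
    destruct (square_finite_subcover (fun k => enlarge (d k) (c k)) (1 - eps)) as [N HN].
    { intros z Hz. destruct (Hc1 z) as [k Hk]; [unfold square, T2 in *; lra|].
      exists k. destruct (Hd k) as [[? ?] _]. unfold inopen, enlarge, in_rect in *; simpl. lra. }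
    pose proof (finite_cover_area _ N (1 - eps) ltac:(lra) HN) as Harea.
    assert (Henl : sum_f_R0 (fun k => area (enlarge (d k) (c k))) N <=
                   sum_f_R0 (fun k => area (c k)) N + eps * (1 - (1/2) ^ (S N))).
    { rewrite <- geom_psum, <- sum_plus. apply sum_Rle. intros k _.
      destruct (Hd k) as [[? ?] <-]. apply area_enlarge. lra. }
    pose proof (sum_incr _ N s Hc2 (fun k => area_nonneg (c k))).
    assert (0 < (1/2) ^ (S N)) by (apply pow_lt; lra).
    nra. }
  apply Rnot_lt_le. intros Hlt.
  set (eps := Rmin (1/2) ((1 - s) / 4)).
  assert (He : 0 < eps <= 1/2) by (unfold eps; split; [apply Rmin_pos; lra|apply Rmin_l]).
  assert (He2 : eps <= (1 - s) / 4) by apply Rmin_r.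
  specialize (Hshrink eps He). nra.
Qed.

Lemma leb_T2 : 1 <= leb T2.
Proof. apply leb_ge; [intros x H; exact H|]. exact cover_T2_ge_1. Qed.

Definition band (lo hi : R) : R * R -> Prop := fun x => T2 x /\ lo <= snd x < hi.

Lemma band_measurable lo hi : measurable (band lo hi).
Proof.
  apply (measurable_ext (fun x => below hi x /\ (T2 x /\ ~ below lo x))).
  - intros x. unfold band, below. split.
    + intros [[HT Hhi] [_ Hlo]]. split; [exact HT|]. split; [|exact Hhi].
      apply Rnot_lt_le. intros Hlt. apply Hlo. split; assumption.
    + intros [HT Hx]. split; [split; [exact HT|lra]|]. split; [exact HT|]. lra.
  - apply measurable_inter; [|apply measurable_compl]; apply below_measurable.
Qed.

Definition strip (m : nat) (a b : R) : R * R -> Prop :=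
  fun x => T2 x /\ a <= frac (INR m * snd x) < b.

Lemma strip_inT2 m a b : inT2 (strip m a b).
Proof. intros x [H _]. exact H. Qed.

Lemma strip_bands m a b : (1 <= m)%nat -> 0 <= a -> b <= 1 -> forall x,
  strip m a b x <-> exists j, (j < m)%nat /\ band ((INR j + a) / INR m) ((INR j + b) / INR m) x.
Proof.
  intros Hm1 Ha Hb x. assert (Hm : 0 < INR m) by (apply lt_0_INR; lia).
  assert (Hband : forall j : nat, band ((INR j + a) / INR m) ((INR j + b) / INR m) x <->
                  T2 x /\ INR j + a <= INR m * snd x < INR j + b).
  { intros j. unfold band.
    split; intros [HT [H1 H2]]; split; try exact HT; split.
    - apply (Rmult_le_compat_l (INR m)) in H1; [|lra]. field_simplify in H1; lra.
    - apply (Rmult_lt_compat_l (INR m)) in H2; [|lra]. field_simplify in H2; lra.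
    - apply (Rmult_le_reg_l (INR m)); [lra|]. field_simplify; lra.
    - apply (Rmult_lt_reg_l (INR m)); [lra|]. field_simplify; lra. }
  unfold strip. split.
  - intros [HT Hf]. pose proof HT as [_ [Hp0 Hp1]].
    set (y := INR m * snd x) in *.
    assert (Hy : 0 <= y < INR m) by (unfold y; split; nra).
    destruct (base_Int_part y) as [B1 B2].
    assert (Hj0 : (0 <= Int_part y)%Z) by (apply le_IZR, Rnot_lt_le; intros Hlt;
      apply lt_IZR in Hlt; assert (IZR (Int_part y) <= -1) by (apply IZR_le; lia); lra).
    assert (Hj : INR (Z.to_nat (Int_part y)) = IZR (Int_part y))
      by (rewrite INR_IZR_INZ, Z2Nat.id; auto).
    exists (Z.to_nat (Int_part y)). unfold frac in Hf. split.
    + apply INR_lt. rewrite Hj. lra.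
    + apply Hband. rewrite Hj. fold y. split; [exact HT|lra].
  - intros [j [Hj Hx]]. apply Hband in Hx. destruct Hx as [HT Hx]. split; [exact HT|].
    unfold frac. rewrite (Int_part_unique (Z.of_nat j)); rewrite <- INR_IZR_INZ; lra.
Qed.

Lemma strip_measurable m a b : (1 <= m)%nat -> 0 <= a -> b <= 1 -> measurable (strip m a b).
Proof.
  intros Hm Ha Hb.
  apply (measurable_ext (fun x => exists j, (j < m)%nat /\ band ((INR j + a) / INR m) ((INR j + b) / INR m) x)).
  - intros x. symmetry. apply strip_bands; assumption.
  - apply measurable_finite_union. intros j. apply band_measurable.
Qed.

(* The m bands of a strip set are covered by m rectangles of area (b - a)/m. *)
Lemma leb_strip_le m a b : (1 <= m)%nat -> 0 <= a <= b -> b <= 1 -> leb (strip m a b) <= b - a.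
Proof.
  intros Hm Hab Hb. assert (Hmp : 0 < INR m) by (apply lt_0_INR; lia).
  set (r j := {| ra1 := 0; rb1 := 1; ra2 := (INR j + a) / INR m; rb2 := (INR j + b) / INR m |}).
  replace (b - a) with (sum_f_R0 (fun j => area (r j)) (pred m)).
  - apply leb_le_finite_cover; [apply strip_inT2|].
    intros x Hx. apply (strip_bands m a b Hm (proj1 Hab) Hb) in Hx.
    destruct Hx as [j [Hj [[[? ?] _] [? ?]]]]. exists j. split; [lia|].
    unfold in_rect, r; simpl. lra.
  - rewrite (sum_eq _ (fun _ => (b - a) / INR m)).
    + rewrite sum_cte. replace (S (pred m)) with m by lia. field. lra.
    + intros j _. unfold area, r; simpl. rewrite (Rmax_right 0 (1 - 0)) by lra.
      rewrite Rmax_right; [field; lra|].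
      replace ((INR j + b) / INR m - (INR j + a) / INR m) with ((b - a) / INR m) by (field; lra).
      apply Rmult_le_pos; [lra|left; apply Rinv_0_lt_compat; exact Hmp].
Qed.

(* Strip sets have exactly the expected measure: the complement of strip(a,b)
   lies in strip(0,a) u strip(b,1), and the whole torus has measure >= 1. *)
Lemma leb_strip m a b : (1 <= m)%nat -> 0 <= a <= b -> b <= 1 -> leb (strip m a b) = b - a.
Proof.
  intros Hm Hab Hb. apply Rle_antisym; [apply leb_strip_le; assumption|].
  destruct (strip_measurable m a b Hm (proj1 Hab) Hb) as [_ Hcar].
  specialize (Hcar T2 (fun x H => H)).
  rewrite (leb_ext (fun x => T2 x /\ strip m a b x) (strip m a b)) in Hcar
    by (intros x; split; [tauto|intros H; split; [apply H|exact H]]).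
  assert (Hcompl : leb (fun x => T2 x /\ ~ strip m a b x) <= a + (1 - b)).
  { eapply Rle_trans; [apply (leb_mono _ (fun x => strip m 0 a x \/ strip m b 1 x))|].
    - intros x [H|H]; exact (proj1 H).
    - intros x [HT Hn]. pose proof (frac_range (INR m * snd x)).
      destruct (Rlt_dec (frac (INR m * snd x)) a); [left|right]; split; try exact HT; try lra.
      split; [|lra]. apply Rnot_lt_le. intros Hlt. apply Hn. split; [exact HT|lra].
    - eapply Rle_trans; [apply leb_union; apply strip_inT2|].
      pose proof (leb_strip_le m 0 a Hm ltac:(lra) ltac:(lra)).
      pose proof (leb_strip_le m b 1 Hm ltac:(lra) ltac:(lra)). lra. }
  pose proof leb_T2. lra.
Qed.

Lemma phi_T2 alpha beta x : T2 (phi alpha beta x).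
Proof. unfold T2, phi; simpl. split; apply frac_range. Qed.

Lemma iter_T2 f k x : (forall y, T2 (f y)) -> T2 x -> T2 (Nat.iter k f x).
Proof. intros Hf Hx. destruct k; simpl; auto. Qed.

Section RationalAlpha.

Variables (alpha beta : R) (m : nat).
Hypothesis Hm : (1 <= m)%nat.
Hypothesis Halpha : exists j : Z, INR m * alpha = IZR j.

(* Since m*alpha*theta(q) is an integer, phi acts on frac (m p) as the
   rotation by m*beta. *)
Lemma frac_m_snd_phi x :
  frac (INR m * snd (phi alpha beta x)) = frac (INR m * snd x + INR m * beta).
Proof.
  destruct Halpha as [j Hj].
  unfold phi; simpl. rewrite frac_mul_nat.
  assert (Hth : theta (fst x) = 1 \/ theta (fst x) = -1)
    by (unfold theta; destruct (Rlt_dec (fst x) (1/2)); auto).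
  destruct Hth as [-> | ->].
  - replace (INR m * (snd x + alpha * 1 + beta)) with (INR m * snd x + INR m * beta + IZR j)
      by (rewrite <- Hj; ring).
    apply frac_addZ.
  - replace (INR m * (snd x + alpha * -1 + beta)) with (INR m * snd x + INR m * beta + IZR (- j))
      by (rewrite opp_IZR, <- Hj; ring).
    apply frac_addZ.
Qed.

Lemma frac_m_snd_iter k x :
  frac (INR m * snd (Nat.iter k (phi alpha beta) x)) = frac (INR m * snd x + INR k * (INR m * beta)).
Proof.
  induction k as [|k IH]; simpl Nat.iter.
  - simpl. f_equal. ring.
  - rewrite frac_m_snd_phi, <- frac_frac_add, IH, frac_frac_add, S_INR. f_equal. ring.
Qed.

(* The correlation of phi^-k strip(0,1/2) with strip(c,d) is the measure of
   a strip set: it only depends on the rotation angle t = frac (k m beta). *)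
Lemma preimage_strip_inter k c d lo hi :
  (forall u, 0 <= u < 1 ->
     ((0 <= frac (u + frac (INR k * (INR m * beta))) < 1/2 /\ c <= u < d) <-> lo <= u < hi)) ->
  leb (fun x => preim_iter (phi alpha beta) k (strip m 0 (1/2)) x /\ strip m c d x) =
  leb (strip m lo hi).
Proof.
  intros H. apply leb_ext. intros x. unfold preim_iter, strip.
  rewrite frac_m_snd_iter, <- frac_frac_add, (Rplus_comm _ (INR k * _)), <- frac_frac_add,
    Rplus_comm.
  specialize (H (frac (INR m * snd x)) (frac_range _)).
  split.
  - intros [[HT [_ H1]] [_ H2]]. split; [exact HT|]. apply H. auto.
  - intros [HT H1]. apply H in H1. destruct H1 as [H1 H2].
    split; split; try exact HT; try exact H2.
    split; [apply iter_T2; [apply phi_T2|exact HT]|exact H1].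
Qed.

(* Checks an arc identity for the rotation t, splitting on whether u + t wraps around 1. *)
Ltac solve_arc :=
  let u := fresh "u" in let Hu := fresh "Hu" in
  intros u Hu;
  match goal with Ht : 0 <= ?t < 1 |- _ =>
    destruct (frac_sum_cases u t Hu Ht) as [[? ->]|[? ->]]; lra end.

Lemma correlation_defects_sum k :
  Rabs (leb (fun x => preim_iter (phi alpha beta) k (strip m 0 (1/2)) x /\ strip m 0 (1/2) x) - 1/2 * (1/2)) +
  Rabs (leb (fun x => preim_iter (phi alpha beta) k (strip m 0 (1/2)) x /\ strip m (1/4) (3/4) x) - 1/2 * (1/2))
  = 1/4.
Proof.
  pose proof (frac_range (INR k * (INR m * beta))) as Ht.
  set (t := frac (INR k * (INR m * beta))) in *.
  assert (Harc : forall c d lo hi,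
    (forall u, 0 <= u < 1 -> ((0 <= frac (u + t) < 1/2 /\ c <= u < d) <-> lo <= u < hi)) ->
    leb (fun x => preim_iter (phi alpha beta) k (strip m 0 (1/2)) x /\ strip m c d x) =
    leb (strip m lo hi)) by (intros; apply preimage_strip_inter; assumption).
  destruct (Rle_dec t (1/4)); [|destruct (Rle_dec t (1/2)); [|destruct (Rle_dec t (3/4))]].
  - rewrite (Harc 0 (1/2) 0 (1/2 - t)) by solve_arc.
    rewrite (Harc (1/4) (3/4) (1/4) (1/2 - t)) by solve_arc.
    rewrite !leb_strip by (auto; lra).
    rewrite Rabs_right by lra. rewrite Rabs_left1 by lra. lra.
  - rewrite (Harc 0 (1/2) 0 (1/2 - t)) by solve_arc.
    rewrite (Harc (1/4) (3/4) (1 - t) (3/4)) by solve_arc.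
    rewrite !leb_strip by (auto; lra).
    rewrite Rabs_left1 by lra. rewrite Rabs_left1 by lra. lra.
  - rewrite (Harc 0 (1/2) (1 - t) (1/2)) by solve_arc.
    rewrite (Harc (1/4) (3/4) (1 - t) (3/4)) by solve_arc.
    rewrite !leb_strip by (auto; lra).
    rewrite Rabs_left1 by lra. rewrite Rabs_right by lra. lra.
  - rewrite (Harc 0 (1/2) (1 - t) (1/2)) by solve_arc.
    rewrite (Harc (1/4) (3/4) (1/4) (3/2 - t)) by solve_arc.
    rewrite !leb_strip by (auto; lra).
    rewrite Rabs_right by lra. rewrite Rabs_right by lra. lra.
Qed.

(* If both Cesaro averages of correlation defects tended to 0, so would their
   sum, which is constantly 1/4. *)
Theorem not_weak_mixing : ~ weak_mixing (phi alpha beta).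
Proof.
  intros Hwm.
  assert (HA : measurable (strip m 0 (1/2))) by (apply strip_measurable; auto; lra).
  assert (HB : measurable (strip m (1/4) (3/4))) by (apply strip_measurable; auto; lra).
  pose proof (Hwm _ _ HA HA) as H1. pose proof (Hwm _ _ HA HB) as H2.
  assert (LA : leb (strip m 0 (1/2)) = 1/2) by (rewrite leb_strip by (auto; lra); lra).
  assert (LB : leb (strip m (1/4) (3/4)) = 1/2) by (rewrite leb_strip by (auto; lra); lra).
  rewrite LA in H1, H2. rewrite LB in H2.
  pose proof (CV_plus _ _ _ _ H1 H2) as Hsum.
  assert (Hquarter : Un_cv (fun N =>
            / INR (S N) * sum_f_R0 (fun k => Rabs (leb (fun x => preim_iter (phi alpha beta) k
                 (strip m 0 (1/2)) x /\ strip m 0 (1/2) x) - 1/2 * (1/2))) N +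
            / INR (S N) * sum_f_R0 (fun k => Rabs (leb (fun x => preim_iter (phi alpha beta) k
                 (strip m 0 (1/2)) x /\ strip m (1/4) (3/4) x) - 1/2 * (1/2))) N) (1/4)).
  { apply Un_cv_const. intros N.
    rewrite <- Rmult_plus_distr_l, <- sum_plus,
      (sum_eq _ (fun _ => 1/4)) by (intros; apply correlation_defects_sum).
    rewrite sum_cte. field. apply not_0_INR. lia. }
  pose proof (UL_sequence _ _ _ Hsum Hquarter). lra.
Qed.

(* If moreover m*beta is an integer, strip(0,1/2) is invariant of measure 1/2. *)
Theorem not_ergodic : (exists i : Z, INR m * beta = IZR i) -> ~ ergodic (phi alpha beta).
Proof.
  intros [i Hi] Herg.
  assert (HA : measurable (strip m 0 (1/2))) by (apply strip_measurable; auto; lra).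
  assert (Hinv : forall x, T2 x -> (strip m 0 (1/2) (phi alpha beta x) <-> strip m 0 (1/2) x)).
  { intros x Hx. unfold strip. rewrite frac_m_snd_phi, Hi, frac_addZ.
    pose proof (phi_T2 alpha beta x). tauto. }
  destruct (Herg _ HA Hinv) as [H|H]; rewrite leb_strip in H by (auto; lra); lra.
Qed.

End RationalAlpha.

(* The corollary: alpha = n/m has m*alpha = n, and beta = k + alpha*l gives m*beta = m*k + n*l. *)
Theorem corollary1 (n : Z) (m : nat) (hm : (1 <= m)%nat) (beta : R) :
  ~ weak_mixing (phi (IZR n / INR m) beta) /\
  ((exists k l : Z, beta = IZR k + (IZR n / INR m) * IZR l) ->
   ~ ergodic (phi (IZR n / INR m) beta)).
Proof.
  assert (Hm : INR m <> 0) by (apply not_0_INR; lia).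
  assert (Halpha : exists j : Z, INR m * (IZR n / INR m) = IZR j) by (exists n; field; exact Hm).
  split.
  - exact (not_weak_mixing _ _ m hm Halpha).
  - intros [k [l Hbeta]]. apply (not_ergodic _ _ m hm Halpha).
    exists (Z.of_nat m * k + n * l)%Z.
    rewrite Hbeta, plus_IZR, !mult_IZR, <- INR_IZR_INZ. field. exact Hm.
Qed.
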